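(* Let $\alpha\in\mathbb{R}$, let $\tau,\pi$ be nonzero polynomials, and set $\hat\tau(z)=(1-z^2)^{-\alpha-1/2}\tau(z)$. Suppose $T^{(\alpha+1)}_\pi\hat\tau=\hat\lambda\hat\tau$ for a constant $\hat\lambda$, and set $\lambda=\hat\lambda-2\alpha-1$. Then $T^{(\alpha)}_\tau\pi=\lambda\pi$ and $$B^{(\alpha)}_{\pi\tau}A_{\tau\pi}=T^{(\alpha)}_\tau-\lambda,\qquad A_{\tau\pi}B^{(\alpha)}_{\pi\tau}=T^{(\alpha+1)}_\pi-\hat\lambda.$$
   Context: For a nonzero function $\tau$ and $\alpha\in\mathbb{R}$, $T^{(\alpha)}_\tau=(1-z^2)\left(D_z^2-2\frac{\tau_z}{\tau}D_z+\frac{\tau_{zz}}{\tau}\right)-(2\alpha+1)zD_z+(2\alpha-1)z\frac{\tau_z}{\tau}$. For functions $\tau,\pi$ define $A_{\tau\pi}=\tau^{-1}(\pi D_z-\pi')$ and $B^{(\alpha)}_{\pi\tau}=(1-z^2)A_{\pi\tau}-(2\alpha+1)z\,\tau\,\pi^{-1}$, where $A_{\pi\tau}=\pi^{-1}(\tau D_z-\tau')$. *)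

From HB Require Import structures.
From mathcomp Require Import all_boot all_order all_algebra.
From mathcomp Require Import all_classical all_reals all_analysis.
Set Implicit Arguments. Unset Strict Implicit. Unset Printing Implicit Defensive.
Import Order.TTheory GRing.Theory Num.Theory.
Import numFieldNormedType.Exports.
Local Open Scope ring_scope.

Section Ops.
Variable R : realType.

Definition D2 (f : R -> R) : R -> R := derive1 (derive1 f).

Definition Top (a : R) (tau : R -> R) (f : R -> R) : R -> R :=
  fun z => (1 - z ^+ 2) * (D2 f z - 2 * (derive1 tau z / tau z) * derive1 f z
                           + (D2 tau z / tau z) * f z)
           - (2 * a + 1) * z * derive1 f z
           + (2 * a - 1) * z * (derive1 tau z / tau z) * f z.

Definition Aop (tau pi : R -> R) (f : R -> R) : R -> R :=
  fun z => (pi z * derive1 f z - derive1 pi z * f z) / tau z.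

Definition Bop (a : R) (pi tau : R -> R) (f : R -> R) : R -> R :=
  fun z => (1 - z ^+ 2) * Aop pi tau f z - (2 * a + 1) * z * (tau z / pi z) * f z.

Definition pfun (p : {poly R}) : R -> R := fun x => p.[x].

Definition hat (a : R) (tau : {poly R}) : R -> R :=
  fun z => powR (1 - z ^+ 2) (- a - 2^-1) * tau.[z].

End Ops.

From HB Require Import structures.
From mathcomp Require Import all_boot all_order all_algebra.
From mathcomp Require Import all_classical all_reals all_analysis.
From mathcomp Require Import ring lra.
Import Order.TTheory GRing.Theory Num.Theory.
Import numFieldNormedType.Exports.
Local Open Scope ring_scope.

(* Everything is governed by the polynomial [eigen_defect a lam tau pi], which is
   tau (T^(a)_tau pi - lam pi) with denominators cleared.  Up to the nonvanishing
   factor (1 - z^2)^(-a-1/2) / pi it is also T^(a+1)_pi hat_tau - lhat hat_tau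
   with lhat = lam + 2a + 1, so the hypothesis makes it vanish on (-1, 1) away from
   the roots of pi, hence identically.  A direct computation shows that
   B A - (T_tau - lam) and A B - (T_pi - lhat) are both multiplication by
   - eigen_defect / (tau pi). *)

Section Intertwining.
Set Implicit Arguments. Unset Strict Implicit.
Variable R : realType.
Implicit Types (f g : R -> R) (x z a e lam lhat : R) (p tau pi : {poly R}).

Lemma derive1_is_derive f x d : is_derive x 1 f d -> derive1 f x = d.
Proof. by move=> fd; rewrite derive1E; exact: derive_val. Qed.

Lemma is_derive_derive1 f x : derivable f x 1 -> is_derive x 1 f (derive1 f x).
Proof. by move=> fd; rewrite derive1E; exact: derivableP. Qed.

Lemma is_derive_add f g x df dg : is_derive x 1 f df -> is_derive x 1 g dg ->
  is_derive x 1 (fun y => f y + g y) (df + dg).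
Proof. exact: is_deriveD. Qed.

Lemma is_derive_sub f g x df dg : is_derive x 1 f df -> is_derive x 1 g dg ->
  is_derive x 1 (fun y => f y - g y) (df - dg).
Proof. exact: is_deriveB. Qed.

Lemma is_derive_mul f g x df dg : is_derive x 1 f df -> is_derive x 1 g dg ->
  is_derive x 1 (fun y => f y * g y) (df * g x + f x * dg).
Proof.
move=> fd gd; have -> : (fun y => f y * g y) = f * g by [].
by apply: is_derive_eq (is_deriveM fd gd) _; rewrite addrC mulrC.
Qed.

Lemma is_derive_inv g x dg : g x != 0 -> is_derive x 1 g dg ->
  is_derive x 1 (fun y => (g y)^-1) (- dg / g x ^+ 2).
Proof.
move=> gx0 gd; apply: is_derive_eq (is_deriveV gx0 gd) _.
by rewrite /GRing.scale /= mulrC mulNr mulrN.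
Qed.

Lemma is_derive_sqr x : is_derive x 1 (fun y : R => y ^+ 2) (2 * x).
Proof.
have idd : is_derive x 1 (fun y : R => y) 1 := is_derive_id x 1.
have sqd := is_derive_mul idd idd; apply: is_derive_eq sqd _.
by rewrite mul1r mulr1 mulr2n mulrDl mul1r.
Qed.

Lemma is_derive_1subsqr x : is_derive x 1 (fun y : R => 1 - y ^+ 2) (- (2 * x)).
Proof.
have cd : is_derive x 1 (fun _ : R => 1 : R) 0 := is_derive_cst (1 : R) x 1.
have d := is_derive_sub cd (is_derive_sqr x); apply: is_derive_eq d _.
by rewrite sub0r.
Qed.

Lemma derive1_pfun p : derive1 (pfun p) = pfun p^`().
Proof. by apply/funext => x; apply: derive1_is_derive; exact: is_derive_poly. Qed.

Definition weight e x := powR (1 - x ^+ 2) e.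

Definition weight_logder e x := -2 * e * x / (1 - x ^+ 2).

Lemma is_derive_weight e x : 0 < 1 - x ^+ 2 ->
  is_derive x 1 (weight e) (weight e x * weight_logder e x).
Proof.
move=> x_in; have x_in0 : 1 - x ^+ 2 != 0 by rewrite gt_eqF.
have wd := is_derive1_comp (f := fun t => powR t e) (g := fun y => 1 - y ^+ 2)
  (is_derive1_powR e x_in) (is_derive_1subsqr x).
rewrite /weight; apply: is_derive_eq wd _.
rewrite /weight_logder powRB ?x_in0 ?implybT // powRr1 ?ltW //.
by field.
Qed.

Lemma is_derive_weight_logder e x : 0 < 1 - x ^+ 2 ->
  is_derive x 1 (weight_logder e) (-2 * e * (1 + x ^+ 2) / (1 - x ^+ 2) ^+ 2).
Proof.
move=> x_in; have x_in0 : 1 - x ^+ 2 != 0 by rewrite gt_eqF.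
have cd : is_derive x 1 (fun _ : R => -2 * e) 0 := is_derive_cst _ x 1.
have idd : is_derive x 1 (fun y : R => y) 1 := is_derive_id x 1.
have invd := is_derive_inv (g := fun y => 1 - y ^+ 2) x_in0 (is_derive_1subsqr x).
have d := is_derive_mul (is_derive_mul cd idd) invd.
rewrite /weight_logder; apply: is_derive_eq d _.
by field.
Qed.

Lemma is_derive_weightM e tau x : 0 < 1 - x ^+ 2 ->
  is_derive x 1 (fun y => weight e y * tau.[y])
    (weight e x * (weight_logder e x * tau.[x] + tau^`().[x])).
Proof.
move=> x_in.
have d := is_derive_mul (is_derive_weight e x_in) (is_derive_poly tau x).
by apply: is_derive_eq d _; ring.
Qed.

Lemma D2_weightM e tau x : -1 < x < 1 ->
  D2 (fun y => weight e y * tau.[y]) x =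
    weight e x * (weight_logder e x * (weight_logder e x * tau.[x] + tau^`().[x])
      + -2 * e * (1 + x ^+ 2) / (1 - x ^+ 2) ^+ 2 * tau.[x]
      + weight_logder e x * tau^`().[x] + tau^`()^`().[x]).
Proof.
move=> /andP[x_gt x_lt]; have x_in : 0 < 1 - x ^+ 2 by nra.
have -> : D2 (fun y => weight e y * tau.[y]) x =
    derive1 (fun y => weight e y * (weight_logder e y * tau.[y] + tau^`().[y])) x.
  rewrite /D2 !derive1E; apply: near_eq_derive.
  apply: filterS2 (lt_nbhsr x_gt) (lt_nbhsl x_lt) => y y_gt y_lt.
  by apply: derive1_is_derive; apply: is_derive_weightM; nra.
apply: derive1_is_derive.
have logderM := is_derive_mul (is_derive_weight_logder e x_in) (is_derive_poly tau x).
apply: is_derive_eq (is_derive_mul (is_derive_weight e x_in)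
                       (is_derive_add logderM (is_derive_poly tau^`() x))) _.
by rewrite /=; ring.
Qed.

Definition eigen_defect a lam tau pi : {poly R} :=
  (1 - 'X^2) * (pi^`()^`() * tau - (tau^`() * pi^`()) *+ 2 + tau^`()^`() * pi)
  - (2 * a + 1)%:P * 'X * pi^`() * tau + (2 * a - 1)%:P * 'X * tau^`() * pi
  - lam%:P * pi * tau.

Lemma eigen_defectE a lam tau pi z : (eigen_defect a lam tau pi).[z] =
  (1 - z ^+ 2) * (pi^`()^`().[z] * tau.[z] - 2 * (tau^`().[z] * pi^`().[z])
                  + tau^`()^`().[z] * pi.[z])
  - (2 * a + 1) * z * pi^`().[z] * tau.[z] + (2 * a - 1) * z * tau^`().[z] * pi.[z]
  - lam * pi.[z] * tau.[z].
Proof.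
rewrite /eigen_defect !(hornerD, hornerN, hornerM, hornerC, hornerX, hornerXn, hornerMn).
ring.
Qed.

Lemma Top_pfun_defect a lam tau pi z : tau.[z] != 0 ->
  Top a (pfun tau) (pfun pi) z - lam * pi.[z] = (eigen_defect a lam tau pi).[z] / tau.[z].
Proof. by move=> tz; rewrite eigen_defectE /Top /D2 !derive1_pfun /pfun; field. Qed.

Lemma Top_hat_defect a lhat tau pi z : -1 < z < 1 -> pi.[z] != 0 ->
  Top (a + 1) (pfun pi) (hat a tau) z - lhat * hat a tau z =
    weight (- a - 2^-1) z * (eigen_defect a (lhat - 2 * a - 1) tau pi).[z] / pi.[z].
Proof.
move=> z_in pz; have /andP[z_gt z_lt] := z_in.
have z_in0 : 1 - z ^+ 2 != 0 by rewrite gt_eqF //; nra.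
have hatE : hat a tau = fun y => weight (- a - 2^-1) y * tau.[y] by [].
rewrite /Top D2_weightM -?hatE // (derive1_is_derive (is_derive_weightM _ _ _)); last by nra.
rewrite eigen_defectE /D2 !derive1_pfun /pfun /weight_logder hatE.
by field; rewrite pz z_in0.
Qed.

Lemma poly_eq0_on_itv p (x y : R) : x < y ->
  (forall z, x < z < y -> p.[z] = 0) -> p = 0.
Proof.
move=> xy p_itv0; pose pt (i : nat) := x + (y - x) / i.+2%:R.
have pt_in i : x < pt i < y.
  have n_gt0 : 0 < i.+2%:R :> R by rewrite ltr0n.
  have yx_gt0 : 0 < y - x by rewrite subr_gt0.
  have q_gt0 : 0 < (y - x) / i.+2%:R by rewrite divr_gt0.
  have q_lt : (y - x) / i.+2%:R < y - x by rewrite ltr_pdivrMr // ltr_pMr // ltr1n.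
  rewrite /pt; move: q_gt0 q_lt; set q := _ / _; lra.
apply: (@roots_geq_poly_eq0 _ _ [seq pt i | i <- iota 0 (size p)]).
- by apply/allP => _ /mapP[i _ ->]; apply/eqP/p_itv0.
- rewrite map_inj_uniq ?iota_uniq // => i j /addrI/mulfI.
  rewrite subr_eq0 gt_eqF // => /(_ isT)/invr_inj/eqP.
  by rewrite eqr_nat => /eqP[].
- by rewrite size_map size_iota.
Qed.

Lemma eigen_defect_eq0 a lhat tau pi : pi != 0 ->
  (forall z, -1 < z < 1 -> pi.[z] != 0 ->
     Top (a + 1) (pfun pi) (hat a tau) z = lhat * hat a tau z) ->
  eigen_defect a (lhat - 2 * a - 1) tau pi = 0.
Proof.
move=> pi0 hat_eigen.
suff /eqP : eigen_defect a (lhat - 2 * a - 1) tau pi * pi = 0.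
  by rewrite mulf_eq0 (negbTE pi0) orbF => /eqP.
apply: (poly_eq0_on_itv (x := -1) (y := 1)) => [|z z_in]; first by rewrite gtrN.
rewrite hornerM; have [->|pz] := eqVneq pi.[z] 0; first by rewrite mulr0.
have := Top_hat_defect a lhat tau z_in pz.
rewrite hat_eigen // subrr => /esym/eqP; rewrite !mulf_eq0 invr_eq0 (negbTE pz) orbF.
have /andP[z_gt z_lt] := z_in; have z_in' : 0 < 1 - z ^+ 2 by nra.
by rewrite /weight gt_eqF ?powR_gt0 //= => /eqP->; rewrite mul0r.
Qed.

Lemma AopE tau pi g z :
  Aop (pfun tau) (pfun pi) g z = (pi.[z] * derive1 g z - pi^`().[z] * g z) / tau.[z].
Proof. by rewrite /Aop derive1_pfun. Qed.

Lemma is_derive_Aop tau pi f z : tau.[z] != 0 ->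
  derivable f z 1 -> derivable (derive1 f) z 1 ->
  is_derive z 1 (Aop (pfun tau) (pfun pi) f)
    ((pi.[z] * D2 f z - pi^`()^`().[z] * f z
      - tau^`().[z] * Aop (pfun tau) (pfun pi) f z) / tau.[z]).
Proof.
move=> tz /is_derive_derive1 fd /is_derive_derive1 f'd.
have tau_invd := is_derive_inv (g := fun y => tau.[y]) tz (is_derive_poly tau z).
have numd := is_derive_sub (is_derive_mul (is_derive_poly pi z) f'd)
                           (is_derive_mul (is_derive_poly pi^`() z) fd).
have d := is_derive_mul numd tau_invd.
rewrite /Aop derive1_pfun; apply: is_derive_eq d _.
by rewrite /D2 /pfun; field.
Qed.

Lemma BopAop a lam tau pi f z : tau.[z] != 0 -> pi.[z] != 0 ->
  derivable f z 1 -> derivable (derive1 f) z 1 ->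
  Bop a (pfun pi) (pfun tau) (Aop (pfun tau) (pfun pi) f) z =
    Top a (pfun tau) f z - lam * f z
    - (eigen_defect a lam tau pi).[z] / (tau.[z] * pi.[z]) * f z.
Proof.
move=> tz pz fd f'd.
rewrite /Bop AopE (derive1_is_derive (is_derive_Aop pi tz fd f'd)).
rewrite /Top /D2 /Aop !derive1_pfun /pfun eigen_defectE.
by field; rewrite tz pz.
Qed.

Lemma AopBop a lhat tau pi f z : tau.[z] != 0 -> pi.[z] != 0 ->
  derivable f z 1 -> derivable (derive1 f) z 1 ->
  Aop (pfun tau) (pfun pi) (Bop a (pfun pi) (pfun tau) f) z =
    Top (a + 1) (pfun pi) f z - lhat * f z
    - (eigen_defect a (lhat - 2 * a - 1) tau pi).[z] / (tau.[z] * pi.[z]) * f z.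
Proof.
move=> tz pz fd f'd.
have cd : is_derive z 1 (fun _ : R => 2 * a + 1) 0 := is_derive_cst _ z 1.
have idd : is_derive z 1 (fun y : R => y) 1 := is_derive_id z 1.
have pi_invd := is_derive_inv (g := fun y => pi.[y]) pz (is_derive_poly pi z).
have ratiod := is_derive_mul (is_derive_poly tau z) pi_invd.
have Bd := is_derive_sub
  (is_derive_mul (is_derive_1subsqr z) (is_derive_Aop tau pz fd f'd))
  (is_derive_mul (is_derive_mul (is_derive_mul cd idd) ratiod) (is_derive_derive1 fd)).
rewrite AopE (derive1_is_derive Bd).
rewrite /Bop /Top /D2 /Aop !derive1_pfun /pfun eigen_defectE.
by field; rewrite tz pz.
Qed.

End Intertwining.

Theorem mainTheorem8 (R : realType) (a : R) (tau pi : {poly R}) (lhat : R) :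
  tau != 0 -> pi != 0 ->
  (forall z : R, -1 < z < 1 -> pi.[z] != 0 ->
     Top (a + 1) (pfun pi) (hat a tau) z = lhat * hat a tau z) ->
  let lam := lhat - 2 * a - 1 in
  (forall z : R, tau.[z] != 0 ->
     Top a (pfun tau) (pfun pi) z = lam * pi.[z]) /\
  (forall (f : R -> R) (z : R), tau.[z] != 0 -> pi.[z] != 0 ->
     (\forall x \near z, derivable f x 1) -> derivable (derive1 f) z 1 ->
     Bop a (pfun pi) (pfun tau) (Aop (pfun tau) (pfun pi) f) z
       = Top a (pfun tau) f z - lam * f z /\
     Aop (pfun tau) (pfun pi) (Bop a (pfun pi) (pfun tau) f) z
       = Top (a + 1) (pfun pi) f z - lhat * f z).
Proof.
move=> _ pi0 hat_eigen lam.
have defect0 := eigen_defect_eq0 pi0 hat_eigen.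
split=> [z tz | f z tz pz /nbhs_singleton fd f'd].
  by apply/eqP; rewrite -subr_eq0 Top_pfun_defect // defect0 horner0 mul0r.
rewrite (BopAop a lam) // (AopBop a lhat) // defect0 horner0 !mul0r !subr0.
by split.
Qed.
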